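(* For every language $L$ that has a neutral letter, $Q^{\star}_L\mathrm{FO}\equiv Q^{1}_L\mathrm{FO}$, where in both logics the quantifier may bind relation variables of any arity $m\ge1$.
   Context: A letter $e$ is a neutral letter of $L\subseteq\Sigma^*$ if for all $u,v\in\Sigma^*$, $uv\in L\iff uev\in L$. Strings as structures: a nonempty string $b_0\cdots b_{n-1}$ over the ordered alphabet $(a_1,\dots,a_s)$ is the structure with universe $\{0,\dots,n-1\}$, natural order $<$, and unary predicates $P_{a_i}=\{j:b_j=a_i\}$. FO uses $=$, $<$, these predicates, $\min,\max$, connectives, $\exists,\forall$; no other built-in relations. $m$-ary second-order Lindström quantifiers: for $L$ over $(a_1,\dots,a_s)$ and distinct $m$-ary relation variables $\overline X=(X_1,\dots,X_k)$, over universe $\{0,\dots,n-1\}$ encode a relation $A_i\subseteq\{0,\dots,n-1\}^m$ by the bit string $s^i_0\cdots s^i_{n^m-1}$ with $s^i_j=1$ iff the $j$-th tuple of $\{0,\dots,n-1\}^m$ in lexicographic order is in $A_i$. For $Q^1_L$ the $2^{n^mk}$ assignments are ordered lexicographically by the interleaved code $s^1_0\cdots s^k_0s^1_1\cdots s^k_1\cdots$; for $Q^\star_L$ by the concatenated code $s^1_0\cdots s^1_{n^m-1}\cdots s^k_0\cdots s^k_{n^m-1}$. Then $\mathcal A\models Q\overline X[\varphi_1,\dots,\varphi_{s-1}]$ iff the word whose $i$-th letter is $a_j$ for the least $j$ with $\varphi_j$ true at the $i$-th assignment (and $a_s$ if none) lies in $L$. $Q^1_L\mathrm{FO}$ (resp.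 $Q^\star_L\mathrm{FO}$) consists of all formulas $Q^1_L\overline X[\varphi_1,\dots,\varphi_{s-1}]$ (resp. with $Q^\star_L$) with $\overline X$ a tuple of $m$-ary relation variables for some $m\ge1$ and $\varphi_i$ first-order formulas possibly containing $\overline X$. $\mathcal L\equiv\mathcal L'$ means over every string signature each sentence of either logic has an equivalent sentence of the other. *)

From mathcomp Require Import all_boot.
Set Implicit Arguments. Unset Strict Implicit. Unset Printing Implicit Defensive.

(** * Strings as structures.
    A string over the ordered alphabet (b_0,...,b_{t-1}) is [w : seq 'I_t];
    the structure has universe {0,...,size w - 1}. *)

Inductive term : Type :=
| TVar of nat
| TMin
| TMax.

Inductive fo (t : nat) : Type :=
| FEq of term & term
| FLt of term & term
| FP of 'I_t & term
| FRel of nat & seq term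
| FTrue
| FFalse
| FNot of fo t
| FAnd of fo t & fo t
| FOr of fo t & fo t
| FImp of fo t & fo t
| FIff of fo t & fo t
| FEx of nat & fo t
| FAll of nat & fo t.

Arguments FTrue {t}.
Arguments FFalse {t}.

Definition term_val (n : nat) (env : nat -> nat) (x : term) : nat :=
  match x with
  | TVar v => env v
  | TMin => 0
  | TMax => n.-1
  end.

Definition upd (env : nat -> nat) (v a : nat) : nat -> nat :=
  fun u => if u == v then a else env u.

Fixpoint eval (t : nat) (w : seq 'I_t) (env : nat -> nat)
    (R : nat -> seq nat -> bool) (phi : fo t) : bool :=
  let n := size w in
  match phi with
  | FEq x y => term_val n env x == term_val n env y
  | FLt x y => term_val n env x < term_val n env y
  | FP a x => nth None (map Some w) (term_val n env x) == Some a
  | FRel X xs => R X (map (term_val n env) xs)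
  | FTrue => true
  | FFalse => false
  | FNot p => ~~ eval w env R p
  | FAnd p q => eval w env R p && eval w env R q
  | FOr p q => eval w env R p || eval w env R q
  | FImp p q => eval w env R p ==> eval w env R q
  | FIff p q => eval w env R p == eval w env R q
  | FEx v p => has (fun a => eval w (upd env v a) R p) (iota 0 n)
  | FAll v p => all (fun a => eval w (upd env v a) R p) (iota 0 n)
  end.

Definition term_closed (bnd : seq nat) (x : term) : bool :=
  match x with TVar v => v \in bnd | _ => true end.

Fixpoint closed_in (t : nat) (bnd Xs : seq nat) (phi : fo t) : bool :=
  match phi with
  | FEq x y | FLt x y => term_closed bnd x && term_closed bnd y
  | FP _ x => term_closed bnd x
  | FRel X xs => (X \in Xs) && all (term_closed bnd) xs
  | FTrue | FFalse => true
  | FNot p => closed_in bnd Xs p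
  | FAnd p q | FOr p q | FImp p q | FIff p q =>
      closed_in bnd Xs p && closed_in bnd Xs q
  | FEx v p | FAll v p => closed_in (v :: bnd) Xs p
  end.

(** * Lindström quantifier sentences  Q X̄ [phi_1,...,phi_{s-1}]. *)
Record qsent (t : nat) : Type := QSent {
  q_arity : nat;
  q_vars : seq nat;
  q_phis : seq (fo t)
}.

Definition qsent_wf (s t : nat) (q : qsent t) : Prop :=
  [/\ 1 <= q_arity q, 0 < size (q_vars q), uniq (q_vars q),
      size (q_phis q) = s.-1 &
      all (closed_in [::] (q_vars q)) (q_phis q)].

(** The two orderings of the assignments. *)
Inductive qorder := Interleaved (* Q^1 *) | Concatenated (* Q^star *).

Definition tuple_index (n : nat) (tu : seq nat) : nat :=
  foldl (fun acc x => acc * n + x) 0 tu.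

(** Position in the code of bit s^i_j (relation i, tuple index j). *)
Definition code_pos (o : qorder) (n m k i j : nat) : nat :=
  match o with
  | Interleaved => j * k + i
  | Concatenated => i * n ^ m + j
  end.

(** Bit at position p (from the left) of the r-th bit string of length N
    in lexicographic order (0 < 1). *)
Definition lex_bit (N r p : nat) : bool := odd (r %/ 2 ^ (N.-1 - p)).

(** The relation assignment encoded by the r-th code. *)
Definition assign_of (o : qorder) (n m : nat) (Xs : seq nat) (r : nat)
    : nat -> seq nat -> bool :=
  let k := size Xs in
  let N := k * n ^ m in
  fun X tu =>
    (X \in Xs) && (size tu == m) && all (fun x => x < n) tu &&
    lex_bit N r (code_pos o n m k (index X Xs) (tuple_index n tu)).

Definition q_word (o : qorder) (t : nat) (q : qsent t) (w : seq 'I_t)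
    : seq nat :=
  let n := size w in
  let m := q_arity q in
  let Xs := q_vars q in
  let N := size Xs * n ^ m in
  [seq find (fun phi => eval w (fun _ => 0) (assign_of o n m Xs r) phi)
            (q_phis q) | r <- iota 0 (2 ^ N)].

Definition in_lang (s : nat) (L : seq 'I_s -> Prop) (ws : seq nat) : Prop :=
  exists u : seq 'I_s, map val u = ws /\ L u.

Definition qsat (o : qorder) (s : nat) (L : seq 'I_s -> Prop) (t : nat)
    (q : qsent t) (w : seq 'I_t) : Prop :=
  in_lang L (q_word o q w).

Definition neutral_letter (s : nat) (L : seq 'I_s -> Prop) (e : 'I_s) : Prop :=
  forall u v : seq 'I_s, L (u ++ v) <-> L (u ++ e :: v).

Definition simulates (o1 o2 : qorder) (s : nat) (L : seq 'I_s -> Prop) : Prop :=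
  forall (t : nat) (q : qsent t), qsent_wf s q ->
    exists q' : qsent t, qsent_wf s q' /\
      forall w : seq 'I_t, 0 < size w -> (qsat o1 L q w <-> qsat o2 L q' w).

Definition logic_equiv (o1 o2 : qorder) (s : nat) (L : seq 'I_s -> Prop)
    : Prop :=
  simulates o1 o2 L /\ simulates o2 o1 L.

(* Both quantifiers run through the same 2^(k n^m) assignments of k m-ary relations, in two
   different lexicographic orders.  Raising the arity to m + k makes room for a strictly
   increasing map from the code positions of one order into those of the other: the k extra
   coordinates hold a marker tuple 0..0 (n-1)..(n-1) whose index n^i - 1 grows with the
   relation number i.  Assignments whose support lies in the image of this map are, in
   order, exactly the re-encoded old assignments; relation atoms are rewritten to read the
   moved bits, and every other assignment is sent to the neutral letter.  The new word is
   thus the old one with neutral letters inserted, so it lies in L exactly when the old one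
   does. *)

From mathcomp Require Import all_boot zify.
Set Implicit Arguments. Unset Strict Implicit. Unset Printing Implicit Defensive.

Fixpoint allbits (N : nat) : seq (seq bool) :=
  if N is N'.+1 then map (cons false) (allbits N') ++ map (cons true) (allbits N')
  else [:: [::]].

Lemma mem_allbits N c : (c \in allbits N) = (size c == N).
Proof.
have mem_cons_map b b' c' A : (b :: c' \in map (cons b') A) = (b == b') && (c' \in A).
  by apply/mapP/andP => [[c'' hc [-> ->]] | [/eqP -> hc]]; last exists c'.
elim: N c => [|N IH] [|b c] //=.
- by rewrite mem_cat; apply/negbTE/norP; split; apply/mapP => -[].
- by rewrite mem_cat !mem_cons_map IH eqSS; case: b; rewrite /= ?orbF.
Qed.

Definition lex_bits (N r : nat) : seq bool := mkseq (lex_bit N r) N.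

Lemma mkseq_succ (T : Type) (f : nat -> T) n :
  mkseq f n.+1 = f 0 :: mkseq (fun i => f i.+1) n.
Proof. by rewrite /mkseq /= (iotaDl 1 0) -map_comp. Qed.

Lemma map_lex_bits_iota N : map (lex_bits N) (iota 0 (2 ^ N)) = allbits N.
Proof.
elim: N => [|N IH] //=.
rewrite expnS mul2n -addnn iotaD map_cat add0n -(addn0 (2 ^ N)) iotaDl -!IH -!map_comp addn0.
congr (_ ++ _); apply/eq_in_map => r; rewrite mem_iota => /andP[_ hr];
  rewrite /lex_bits /= mkseq_succ /lex_bit subn0 /=.
- rewrite divn_small //; congr cons; apply/eq_in_map => p; rewrite mem_iota => /andP[_ hp].
  by congr (odd (r %/ 2 ^ _)); lia.
- rewrite divnDl // divnn expn_gt0 /= divn_small //; congr cons.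
  apply/eq_in_map => p; rewrite mem_iota => /andP[_ hp].
  have -> : N - p.+1 = N.-1 - p by lia.
  have hdvd : 2 ^ (N.-1 - p) %| 2 ^ N by apply: dvdn_exp2l; lia.
  rewrite divnDl // oddD.
  have -> : 2 ^ N %/ 2 ^ (N.-1 - p) = 2 ^ p.+1 by rewrite -expnB; [congr (2 ^ _) | |]; lia.
  by rewrite oddX.
Qed.

Lemma ltn_mulD a b r P : a < b -> r < P -> a * P + r < b * P.
Proof. by move=> hab hr; nia. Qed.

Lemma mulnD_inj a r a' r' P : r < P -> r' < P ->
  a * P + r = a' * P + r' -> a = a' /\ r = r'.
Proof.
move=> hr hr' e; have ea : a = a' by nia.
by split => //; subst a'; lia.
Qed.

Lemma tuple_index_acc n a tu :
  foldl (fun acc x => acc * n + x) a tu = a * n ^ size tu + tuple_index n tu.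
Proof.
rewrite /tuple_index; elim: tu a => [|x tu IH] a /=; first by rewrite muln1 addn0.
by rewrite IH [in RHS]IH expnS; lia.
Qed.

Lemma tuple_index_cons n x tu :
  tuple_index n (x :: tu) = x * n ^ size tu + tuple_index n tu.
Proof. by rewrite {1}/tuple_index /= tuple_index_acc. Qed.

Lemma tuple_index_cat n tu1 tu2 :
  tuple_index n (tu1 ++ tu2) = tuple_index n tu1 * n ^ size tu2 + tuple_index n tu2.
Proof. by rewrite {1}/tuple_index foldl_cat tuple_index_acc. Qed.

Lemma tuple_index_lt n tu : all (fun x => x < n) tu -> tuple_index n tu < n ^ size tu.
Proof.
elim: tu => [|x tu IH] //= /andP[hx /IH h].
by rewrite tuple_index_cons expnS ltn_mulD.
Qed.

Lemma tuple_index_inj n tu1 tu2 :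
  all (fun x => x < n) tu1 -> all (fun x => x < n) tu2 -> size tu1 = size tu2 ->
  tuple_index n tu1 = tuple_index n tu2 -> tu1 = tu2.
Proof.
elim: tu1 tu2 => [|x tu1 IH] [|y tu2] //= /andP[_ h1] /andP[_ h2] [hs].
rewrite !tuple_index_cons hs => e.
have h1' := tuple_index_lt h1; rewrite hs in h1'.
have [-> e2] := mulnD_inj h1' (tuple_index_lt h2) e.
by rewrite (IH tu2).
Qed.

Fixpoint tuples (n m : nat) : seq (seq nat) :=
  if m is m'.+1 then flatten [seq [seq a :: z | z <- tuples n m'] | a <- iota 0 n]
  else [:: [::]].

Lemma mem_tuples n m z : (z \in tuples n m) = (size z == m) && all (fun x => x < n) z.
Proof.
elim: m z => [|m IH] z /=; first by rewrite inE; case: z.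
apply/flattenP/idP.
- case=> _ /mapP[a ha ->] /mapP[z' hz' ->] /=; rewrite eqSS.
  by move: hz'; rewrite IH => /andP[-> ->]; move: ha; rewrite mem_iota /= andbT.
- case: z => [|a z] //=; rewrite eqSS => /andP[hs /andP[ha hz]].
  exists [seq a :: z0 | z0 <- tuples n m]; first by apply/mapP; exists a; rewrite ?mem_iota.
  by apply/mapP; exists z; rewrite ?IH ?hs.
Qed.

Lemma tuple_index_surj n m j : j < n ^ m ->
  exists2 z, z \in tuples n m & tuple_index n z = j.
Proof.
elim: m j => [|m IH] j hj; first by exists [::]; case: j hj.
have hP : 0 < n ^ m by move: hj; rewrite expnS; case: (n ^ m); rewrite ?muln0.
have [z hz ez] := IH (j %% n ^ m) (ltn_pmod _ hP).
move: hz; rewrite mem_tuples => /andP[/eqP hs ha].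
exists (j %/ n ^ m :: z); last by rewrite tuple_index_cons ez hs -divn_eq.
by rewrite mem_tuples /= hs eqxx ha ltn_divLR // -expnS hj.
Qed.

Lemma code_pos_lt o n m k i j : i < k -> j < n ^ m -> code_pos o n m k i j < k * n ^ m.
Proof. by case: o => /= hi hj; rewrite ?ltn_mulD // [k * _]mulnC ltn_mulD. Qed.

Lemma code_pos_surj o n m k p : p < k * n ^ m ->
  exists i j, [/\ i < k, j < n ^ m & code_pos o n m k i j = p].
Proof.
move=> hp; have hk : 0 < k by case: k hp.
have hP : 0 < n ^ m by case: (n ^ m) hp; rewrite ?muln0.
case: o => /=.
- exists (p %% k), (p %/ k); split; rewrite -?divn_eq ?ltn_pmod //.
  by rewrite ltn_divLR // mulnC.
- by exists (p %/ n ^ m), (p %% n ^ m); split; rewrite -?divn_eq ?ltn_pmod ?ltn_divLR.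
Qed.

Inductive inserts (e : nat) : seq nat -> seq nat -> Prop :=
| inserts_nil : inserts e [::] [::]
| inserts_keep x u v : inserts e u v -> inserts e (x :: u) (x :: v)
| inserts_new u v : inserts e u v -> inserts e u (e :: v).

Lemma inserts_map_filter (T : eqType) e (F : T -> nat) (P : pred T) (l : seq T) :
  {in l, forall c, ~~ P c -> F c = e} -> inserts e (map F (filter P l)) (map F l).
Proof.
elim: l => [|c l IH] hF /=; first exact: inserts_nil.
have {}IH : inserts e (map F (filter P l)) (map F l).
  by apply: IH => c' hc'; apply: hF; rewrite inE hc' orbT.
case hP: (P c) => /=; first exact: inserts_keep.
by rewrite hF ?inE ?eqxx ?hP //; apply: inserts_new.
Qed.

Section NeutralLetter.
Variables (s : nat) (L : seq 'I_s -> Prop) (e : 'I_s).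
Hypothesis neutral_e : neutral_letter L e.

Lemma inserts_lang_cat u v : inserts (val e) u v -> forall p,
  (exists u', map val u' = u /\ L (p ++ u')) <-> (exists v', map val v' = v /\ L (p ++ v')).
Proof.
elim=> [|x u1 v1 _ IH|u1 v1 _ IH] p //.
- split=> -[[|y w] [] //= [hy hw] hL].
  + have [v' [hv hL']] : exists v', map val v' = v1 /\ L (rcons p y ++ v').
      by apply/IH; exists w; rewrite cat_rcons.
    by exists (y :: v'); rewrite /= hv hy -cat_rcons.
  + have [u' [hu hL']] : exists u', map val u' = u1 /\ L (rcons p y ++ u').
      by apply/IH; exists w; rewrite cat_rcons.
    by exists (y :: u'); rewrite /= hu hy -cat_rcons.
- split=> [/IH [v' [hv hL]] | [[|y v'] [] //= [hy hv] hL]].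
  + by exists (e :: v'); rewrite /= hv; split => //; apply: (neutral_e p v').1.
  + have ey : y = e by apply: val_inj.
    by apply/IH; exists v'; split => //; apply: (neutral_e p v').2; rewrite -ey.
Qed.

Lemma in_lang_inserts u v : inserts (val e) u v -> in_lang L u <-> in_lang L v.
Proof. by move=> huv; apply: (inserts_lang_cat huv [::]). Qed.

End NeutralLetter.

Definition spread (N' : nat) (S : seq nat) (b : seq bool) : seq bool :=
  mkseq (fun p => (p \in S) && nth false b (index p S)) N'.

Definition supported (S : seq nat) (c : seq bool) : bool :=
  all (fun p => nth false c p ==> (p \in S)) (iota 0 (size c)).

Lemma size_spread N' S b : size (spread N' S b) = N'.
Proof. exact: size_mkseq. Qed.

Lemma spread_supported N' S b : supported S (spread N' S b).
Proof.
apply/allP => p; rewrite mem_iota size_spread => hp.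
by rewrite /spread nth_mkseq; [apply/implyP => /andP[] | lia].
Qed.

Lemma nth_spread N' S b q : uniq S -> q < size S -> nth 0 S q < N' ->
  nth false (spread N' S b) (nth 0 S q) = nth false b q.
Proof. by move=> hu hq hN; rewrite nth_mkseq // mem_nth //= index_uniq. Qed.

Lemma supported_cons S x c : supported S (x :: c) =
  (x ==> (0 \in S)) && all (fun p => nth false c p ==> (p.+1 \in S)) (iota 0 (size c)).
Proof. by rewrite /supported [size _]/= -addn1 addnC iotaD /= (iotaDl 1 0) all_map. Qed.

Section ShiftPositions.
Variable S : seq nat.
Hypothesis S_pos : all (fun x => 0 < x) S.

Lemma zero_notin_pos : (0 \in S) = false.
Proof. by apply/negbTE; apply/negP => /(allP S_pos). Qed.

Lemma mem_index_pred p :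
  ((p.+1 \in S) = (p \in map predn S)) * (index p.+1 S = index p (map predn S)).
Proof.
elim: S S_pos => [|x S' IH] //= /andP[hx /IH [h1 h2]]; rewrite !inE h1 h2.
by case: x hx.
Qed.

Lemma supported_cons_pos x c : supported S (x :: c) = ~~ x && supported (map predn S) c.
Proof.
rewrite supported_cons zero_notin_pos implybF; congr andb.
by apply: eq_all => p; rewrite (mem_index_pred p).
Qed.

Lemma supported_cons_zero x c : supported (0 :: S) (x :: c) = supported (map predn S) c.
Proof.
rewrite supported_cons inE eqxx implybT /=.
by apply: eq_all => p; rewrite inE /= (mem_index_pred p).
Qed.

Lemma spread_succ_pos N' b : spread N'.+1 S b = false :: spread N' (map predn S) b.
Proof.
rewrite /spread mkseq_succ zero_notin_pos; congr cons.
by apply: eq_mkseq => p; rewrite !(mem_index_pred p).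
Qed.

Lemma spread_succ_zero N' x b :
  spread N'.+1 (0 :: S) (x :: b) = x :: spread N' (map predn S) b.
Proof.
rewrite /spread mkseq_succ inE eqxx /=; congr cons.
by apply: eq_mkseq => p; rewrite !inE /= !(mem_index_pred p).
Qed.

Lemma sorted_pred : sorted ltn S -> sorted ltn (map predn S).
Proof.
by apply: homo_sorted_in S_pos => a b; rewrite -!topredE /=; lia.
Qed.

End ShiftPositions.

Lemma sorted_ltn_head0 S : sorted ltn S ->
  all (fun y => 0 < y) S \/ exists2 S', S = 0 :: S' & all (fun y => 0 < y) S'.
Proof.
case: S => [|[|x] S] hs; [by left | right | left].
- by exists S => //; apply: (order_path_min ltn_trans hs).
- by rewrite /= (sub_all _ (order_path_min ltn_trans hs)) //= => y; lia.
Qed.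

Lemma filter_supported_allbits N' S : sorted ltn S -> all (fun x => x < N') S ->
  filter (supported S) (allbits N') = map (spread N' S) (allbits (size S)).
Proof.
elim: N' S => [|N' IH] S hs hS; first by case: S hs hS.
have below_pred S' : all (fun x => 0 < x) S' -> all (fun x => x < N'.+1) S' ->
    all (fun x => x < N') (map predn S').
  move=> hpos hlt; rewrite all_map; apply/allP => y hy /=.
  by move: (allP hpos y hy) (allP hlt y hy); lia.
rewrite /= filter_cat !filter_map.
case: (sorted_ltn_head0 hs) => [hpos | [S' eS hpos]]; last subst S.
- have hcons b : preim (cons b) (supported S) =1 (fun c => ~~ b && supported (map predn S) c).
    by move=> c; rewrite /= supported_cons_pos.
  rewrite !(eq_filter (hcons _)) /= filter_pred0 cats0 IH ?sorted_pred ?below_pred ?size_map //.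
  by rewrite -map_comp; apply: eq_map => b; rewrite /= spread_succ_pos.
- have hcons b : preim (cons b) (supported (0 :: S')) =1 supported (map predn S').
    by move=> c; rewrite /= supported_cons_zero.
  move: hS hs => /= hS /path_sorted hs.
  rewrite !(eq_filter (hcons _)) IH ?sorted_pred ?below_pred ?size_map //=.
  by rewrite map_cat -!map_comp; congr (_ ++ _); apply: eq_map => b; rewrite /= spread_succ_zero.
Qed.

Lemma in_lang_spread s (L : seq 'I_s -> Prop) (e : 'I_s) N' S (F F' : seq bool -> nat) :
  neutral_letter L e -> sorted ltn S -> all (fun x => x < N') S ->
  (forall c, size c = N' -> ~~ supported S c -> F' c = val e) ->
  (forall b, size b = size S -> F' (spread N' S b) = F b) ->
  in_lang L (map F (allbits (size S))) <-> in_lang L (map F' (allbits N')).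
Proof.
move=> neutral_e hs hS hF'e hF'F.
have hins : inserts (val e) (map (F' \o spread N' S) (allbits (size S))) (map F' (allbits N')).
  rewrite map_comp -filter_supported_allbits //; apply: inserts_map_filter => c.
  by rewrite mem_allbits => /eqP; apply: hF'e.
suff -> : map F (allbits (size S)) = map (F' \o spread N' S) (allbits (size S)).
  exact: (in_lang_inserts neutral_e hins).
by apply/eq_in_map => b; rewrite mem_allbits => /eqP hb /=; rewrite hF'F.
Qed.

Definition assign_bits (o : qorder) (n m : nat) (Xs : seq nat) (c : seq bool)
    : nat -> seq nat -> bool :=
  fun X tu => (X \in Xs) && (size tu == m) && all (fun x => x < n) tu &&
    nth false c (code_pos o n m (size Xs) (index X Xs) (tuple_index n tu)).

Lemma eq_eval t (w : seq 'I_t) R R' phi :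
  (forall X tu, R X tu = R' X tu) -> forall env, eval w env R phi = eval w env R' phi.
Proof.
move=> hR; elim: phi => //=; try (by move=> p IHp env; rewrite IHp);
  try (by move=> p IHp q IHq env; rewrite IHp IHq).
- by move=> v p IHp env; apply: eq_has => a; rewrite IHp.
- by move=> v p IHp env; apply: eq_all => a; rewrite IHp.
Qed.

Definition q_letter o t (q : qsent t) (w : seq 'I_t) (c : seq bool) : nat :=
  find (eval w (fun _ => 0) (assign_bits o (size w) (q_arity q) (q_vars q) c)) (q_phis q).

Lemma q_word_allbits o t (q : qsent t) w :
  q_word o q w = map (q_letter o q w) (allbits (size (q_vars q) * size w ^ q_arity q)).
Proof.
rewrite -map_lex_bits_iota -map_comp /q_word; apply/eq_in_map => r _ /=.
apply: eq_find => phi; apply: eq_eval => X tu.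
rewrite /assign_of /assign_bits; case hX: (X \in _) => //=; case: eqP => //= hs.
case ha: all => //=; rewrite /lex_bits nth_mkseq //.
by apply: code_pos_lt; [rewrite index_mem | rewrite -hs; apply: tuple_index_lt].
Qed.

Definition fo_exists t (vs : seq nat) (phi : fo t) : fo t := foldr (@FEx t) phi vs.
Definition fo_or t (l : seq (fo t)) : fo t := foldr (@FOr t) FFalse l.
Definition fo_and t (l : seq (fo t)) : fo t := foldr (@FAnd t) FTrue l.

Fixpoint upds (env : nat -> nat) (vs zs : seq nat) : nat -> nat :=
  match vs, zs with
  | v :: vs', z :: zs' => upds (upd env v z) vs' zs'
  | _, _ => env
  end.

Lemma upds_val env vs zs u : uniq vs -> size zs = size vs ->
  upds env vs zs u = if u \in vs then nth 0 zs (index u vs) else env u.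
Proof.
elim: vs zs env => [|v vs IH] [|z zs] env //= /andP[hv hu] [hs].
rewrite IH // inE /upd; case: (eqVneq u v) => [->|huv] /=; first by rewrite (negbTE hv).
by case: (u \in vs).
Qed.

Lemma index_iota0 u n : u < n -> index u (iota 0 n) = u.
Proof.
by move=> hu; rewrite -{1}(add0n u) -(nth_iota 0 0 hu) index_uniq ?size_iota ?iota_uniq.
Qed.

Lemma upds_iota env m z l : size z = m -> l < m -> upds env (iota 0 m) z l = nth 0 z l.
Proof. by move=> hz hl; rewrite upds_val ?iota_uniq ?size_iota // mem_iota hl index_iota0. Qed.

Lemma has_flatten (T : Type) (p : pred T) ss : has p (flatten ss) = has (has p) ss.
Proof. by elim: ss => //= s ss IH; rewrite has_cat IH. Qed.

Lemma eval_fo_exists t (w : seq 'I_t) env R vs phi :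
  eval w env R (fo_exists vs phi) =
  has (fun z => eval w (upds env vs z) R phi) (tuples (size w) (size vs)).
Proof.
elim: vs env => [|v vs IH] env /=; first by rewrite orbF.
rewrite has_flatten has_map; apply: eq_has => a /=.
by rewrite IH has_map.
Qed.

Lemma eval_fo_or t (w : seq 'I_t) env R l : eval w env R (fo_or l) = has (eval w env R) l.
Proof. by elim: l => //= p l ->. Qed.

Lemma eval_fo_and t (w : seq 'I_t) env R l : eval w env R (fo_and l) = all (eval w env R) l.
Proof. by elim: l => //= p l ->. Qed.

Lemma closed_fo_or t bnd Xs (l : seq (fo t)) :
  all (closed_in bnd Xs) l -> closed_in bnd Xs (fo_or l).
Proof. by elim: l => //= p l IH /andP[-> /IH]. Qed.

Lemma closed_fo_and t bnd Xs (l : seq (fo t)) :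
  all (closed_in bnd Xs) l -> closed_in bnd Xs (fo_and l).
Proof. by elim: l => //= p l IH /andP[-> /IH]. Qed.

Lemma closed_fo_exists t bnd Xs vs (phi : fo t) :
  closed_in (rev vs ++ bnd) Xs phi -> closed_in bnd Xs (fo_exists vs phi).
Proof. by elim: vs bnd => //= v vs IH bnd; rewrite rev_cons cat_rcons => /IH. Qed.

Fixpoint subst_rel t (tau : nat -> seq term -> fo t) (phi : fo t) : fo t :=
  match phi with
  | FRel X xs => tau X xs
  | FNot p => FNot (subst_rel tau p)
  | FAnd p q => FAnd (subst_rel tau p) (subst_rel tau q)
  | FOr p q => FOr (subst_rel tau p) (subst_rel tau q)
  | FImp p q => FImp (subst_rel tau p) (subst_rel tau q)
  | FIff p q => FIff (subst_rel tau p) (subst_rel tau q)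
  | FEx v p => FEx v (subst_rel tau p)
  | FAll v p => FAll v (subst_rel tau p)
  | _ => phi
  end.

Lemma eval_subst_rel t (w : seq 'I_t) R R' tau :
  (forall env X xs, eval w env R' (tau X xs) = R X (map (term_val (size w) env) xs)) ->
  forall phi env, eval w env R' (subst_rel tau phi) = eval w env R phi.
Proof.
move=> htau; elim => //=; try (by move=> p IHp env; rewrite IHp);
  try (by move=> p IHp q IHq env; rewrite IHp IHq).
- by move=> v p IHp env; apply: eq_has => a; rewrite IHp.
- by move=> v p IHp env; apply: eq_all => a; rewrite IHp.
Qed.

Lemma closed_subst_rel t Xs (tau : nat -> seq term -> fo t) :
  (forall bnd X xs, X \in Xs -> all (term_closed bnd) xs -> closed_in bnd Xs (tau X xs)) ->
  forall phi bnd, closed_in bnd Xs phi -> closed_in bnd Xs (subst_rel tau phi).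
Proof.
move=> htau; elim => //=; try (by move=> p IHp bnd /IHp);
  try (by move=> p IHp q IHq bnd /andP[/IHp -> /IHq ->]);
  try (by move=> v p IHp bnd /IHp).
by move=> X xs bnd /andP[]; apply: htau.
Qed.

Lemma find_iota0 (p : pred nat) n e : e <= n ->
  (forall l, l < e -> ~~ p l) -> (e < n -> p e) -> find p (iota 0 n) = e.
Proof.
move=> hen hmiss hhit; rewrite -(subnKC hen) iotaD find_cat size_iota.
have -> : has p (iota 0 e) = false.
  by apply/hasPn => l; rewrite mem_iota => /andP[_ /hmiss].
case E: (n - e) => [|d] /=; first by rewrite addn0.
by rewrite hhit ?addn0 //; lia.
Qed.

Lemma sorted_map_iota (f : nat -> nat) N :
  (forall a b, a < b < N -> f a < f b) -> sorted ltn (map f (iota 0 N)).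
Proof.
move=> hf; apply: (homo_sorted_in (P := gtn N)); last exact: iota_ltn_sorted.
- by move=> a b _; rewrite -topredE /= => hb hab; apply: hf; rewrite hab.
- by apply/allP => a; rewrite mem_iota.
Qed.

Lemma nth_spread_iota N' N (f : nat -> nat) b a :
  (forall a b, a < b < N -> f a < f b) -> a < N -> f a < N' ->
  nth false (spread N' (map f (iota 0 N)) b) (f a) = nth false b a.
Proof.
move=> hf ha hfa; have hu := sorted_uniq ltn_trans ltnn (sorted_map_iota hf).
have hnth : nth 0 (map f (iota 0 N)) a = f a by rewrite (nth_map 0) ?size_iota // nth_iota.
by rewrite -hnth nth_spread ?size_map ?size_iota ?hnth.
Qed.

Section Embedding.
Variables (s t : nat) (e : 'I_s) (q : qsent t) (m' : nat).
Variables (tau : nat -> seq term -> fo t) (in_image : nat -> fo t).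

Let Xs := q_vars q.
Let k := size Xs.
Let vars := iota 0 m'.

(* [tau X xs] translates the atom [X(xs)], and [in_image i], with free variables [vars],
   says that the bit of [X_i] at that tuple is the image of a bit of the original code. *)

Definition off_image : fo t :=
  fo_or [seq fo_exists vars (FAnd (FRel t (nth 0 Xs i) (map TVar vars)) (FNot (in_image i)))
        | i <- iota 0 k].

Definition embed_phi (l : nat) : fo t :=
  let phi := subst_rel tau (nth FTrue (q_phis q) l) in
  if l == val e then FOr off_image phi else FAnd (FNot off_image) phi.

Definition embed_qsent : qsent t := QSent m' Xs (mkseq embed_phi (size (q_phis q))).

Lemma embed_qsent_wf : qsent_wf s q -> 0 < m' ->
  (forall i, closed_in (rev vars) Xs (in_image i)) ->
  (forall bnd X xs, X \in Xs -> all (term_closed bnd) xs -> closed_in bnd Xs (tau X xs)) ->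
  qsent_wf s embed_qsent.
Proof.
case=> _ hk hu hsz hcl hm himg htau; split => //=; first by rewrite size_mkseq.
have hoff : closed_in [::] Xs off_image.
  apply: closed_fo_or; rewrite all_map; apply/allP => i; rewrite mem_iota => /andP[_ hi] /=.
  apply: closed_fo_exists; rewrite cats0 /= himg andbT mem_nth //= all_map.
  by apply/allP => v; rewrite /= mem_rev.
rewrite /mkseq all_map; apply/allP => l; rewrite mem_iota => /andP[_ hl] /=.
have hphi : closed_in [::] Xs (subst_rel tau (nth FTrue (q_phis q) l)).
  by apply: closed_subst_rel => //; apply: (all_nthP FTrue hcl).
by rewrite /embed_phi; case: (l == val e); rewrite /= hoff hphi.
Qed.

Lemma map_upds_vars n env z : size z = m' ->
  map (term_val n (upds env vars z)) (map TVar vars) = z.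
Proof.
move=> hz; rewrite -map_comp -{2}(mkseq_nth 0 z) hz; apply/eq_in_map => u.
by rewrite mem_iota => /= hu; rewrite upds_iota.
Qed.

Lemma assign_bits_nth o n c i z : uniq Xs -> i < k -> z \in tuples n m' ->
  assign_bits o n m' Xs c (nth 0 Xs i) z = nth false c (code_pos o n m' k i (tuple_index n z)).
Proof. by move=> hu hi; rewrite mem_tuples /assign_bits mem_nth // index_uniq // => ->. Qed.

Lemma eval_off_image o (w : seq 'I_t) env c S :
  let n := size w in
  uniq Xs -> size c = k * n ^ m' ->
  (forall env i z R, i < k -> z \in tuples n m' ->
     eval w (upds env vars z) R (in_image i) = (code_pos o n m' k i (tuple_index n z) \in S)) ->
  eval w env (assign_bits o n m' Xs c) off_image = ~~ supported S c.
Proof.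
move=> n hu hc himg; rewrite eval_fo_or has_map; apply/hasP/allPn.
- case=> i; rewrite mem_iota => /andP[_ hi] /=; rewrite eval_fo_exists size_iota.
  case/hasP => z hz /=; have := hz; rewrite mem_tuples => /andP[/eqP hzs hza].
  rewrite map_upds_vars // assign_bits_nth // himg // => /andP[hbit hout].
  exists (code_pos o n m' k i (tuple_index n z)); last by rewrite hbit.
  by rewrite mem_iota hc code_pos_lt // -hzs tuple_index_lt.
- case=> p; rewrite mem_iota hc => /andP[_ hp]; rewrite negb_imply => /andP[hbit hout].
  have [i [j [hi hj ep]]] := code_pos_surj o hp.
  have [z hz ez] := tuple_index_surj hj.
  rewrite -ep -ez in hbit hout.
  exists i; first by rewrite mem_iota.
  rewrite /= eval_fo_exists size_iota; apply/hasP; exists z => //=.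
  have := hz; rewrite mem_tuples => /andP[/eqP hzs _].
  by rewrite map_upds_vars // assign_bits_nth // himg // hbit.
Qed.

Lemma qsat_embed_qsent (L : seq 'I_s -> Prop) o1 o2 (w : seq 'I_t) (sig : nat -> nat) :
  let n := size w in let N := k * n ^ q_arity q in let N' := k * n ^ m' in
  neutral_letter L e -> qsent_wf s q ->
  (forall a b, a < b < N -> sig a < sig b) -> (forall a, a < N -> sig a < N') ->
  (forall env i z R, i < k -> z \in tuples n m' ->
     eval w (upds env vars z) R (in_image i) =
     (code_pos o2 n m' k i (tuple_index n z) \in map sig (iota 0 N))) ->
  (forall b c, size b = N -> (forall a, a < N -> nth false c (sig a) = nth false b a) ->
     forall env X xs, eval w env (assign_bits o2 n m' Xs c) (tau X xs) =
       assign_bits o1 n (q_arity q) Xs b X (map (term_val n env) xs)) ->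
  qsat o1 L q w <-> qsat o2 L embed_qsent w.
Proof.
move=> n N N' neutral_e [_ _ hu hsz _] hmono hlt himg htau.
have hN : size (map sig (iota 0 N)) = N by rewrite size_map size_iota.
rewrite /qsat !q_word_allbits.
change (in_lang L (map (q_letter o1 q w) (allbits N)) <->
        in_lang L (map (q_letter o2 embed_qsent w) (allbits N'))).
rewrite -{1}hN.
apply: (in_lang_spread neutral_e (sorted_map_iota hmono)).
- by rewrite all_map; apply/allP => a; rewrite mem_iota => /hlt.
- move=> c hc hout; rewrite /q_letter /= /mkseq find_map.
  have hoff : eval w (fun _ => 0) (assign_bits o2 n m' Xs c) off_image.
    by rewrite (eval_off_image _ hu hc himg).
  apply: find_iota0 => [| l hl | _]; rewrite /= /embed_phi ?eqxx /= ?hoff //.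
  + by rewrite hsz -ltnS prednK ?ltn_ord //; case: s e => [[]|].
  + by rewrite ltn_eqF //= hoff.
- move=> b hb; rewrite hN in hb; set c := spread N' _ b.
  have hoff : eval w (fun _ => 0) (assign_bits o2 n m' Xs c) off_image = false.
    by rewrite (eval_off_image _ hu _ himg) ?size_spread ?spread_supported.
  have hsubst phi : eval w (fun _ => 0) (assign_bits o2 n m' Xs c) (subst_rel tau phi) =
                    eval w (fun _ => 0) (assign_bits o1 n (q_arity q) Xs b) phi.
    apply: eval_subst_rel => env X xs; apply: htau => // a ha.
    by apply: nth_spread_iota; rewrite ?hlt.
  rewrite /q_letter /= -[in RHS](mkseq_nth FTrue (q_phis q)) /mkseq !find_map.
  by apply: eq_find => l; rewrite /= /embed_phi; case: (l == val e); rewrite /= hoff hsubst.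
Qed.

End Embedding.

Definition corner_terms (k i : nat) : seq term := nseq (k - i) TMin ++ nseq i TMax.
Definition corner (k n i : nat) : seq nat := nseq (k - i) 0 ++ nseq i n.-1.

Lemma map_term_val_corner n env k i : map (term_val n env) (corner_terms k i) = corner k n i.
Proof. by rewrite map_cat !map_nseq. Qed.

Lemma closed_corner_terms bnd k i : all (term_closed bnd) (corner_terms k i).
Proof. by rewrite all_cat !all_nseq /= !orbT. Qed.

Lemma size_corner k n i : i <= k -> size (corner k n i) = k.
Proof. by rewrite size_cat !size_nseq; lia. Qed.

Lemma corner_in_tuples k n i : 0 < n -> i <= k -> corner k n i \in tuples n k.
Proof.
move=> hn hi; rewrite mem_tuples size_corner // eqxx all_cat !all_nseq hn.
by rewrite ltn_predL hn !orbT.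
Qed.

Lemma tuple_index_corner k n i : 0 < n -> tuple_index n (corner k n i) = n ^ i - 1.
Proof.
case: n => // n _; rewrite tuple_index_cat.
have -> : tuple_index n.+1 (nseq (k - i) 0) = 0.
  by elim: (k - i) => //= a IH; rewrite tuple_index_cons IH.
rewrite mul0n add0n; elim: i => //= i IH; rewrite tuple_index_cons IH size_nseq expnS.
by have := expn_gt0 n.+1 i; nia.
Qed.

Lemma corner_index_lt n i k : 0 < n -> i < k -> n ^ i - 1 < n ^ k.
Proof.
move=> hn hi; have : n ^ i <= n ^ k by apply: leq_pexp2l => //; lia.
by have := expn_gt0 n i; rewrite hn; lia.
Qed.

Definition marker_eqs t (a k i : nat) : fo t :=
  fo_and [seq FEq t (TVar (a + l)) (nth TMin (corner_terms k i) l) | l <- iota 0 k].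

Lemma closed_marker_eqs t bnd Xs a k i :
  {subset iota a k <= bnd} -> closed_in bnd Xs (marker_eqs t a k i).
Proof.
move=> hsub; apply: closed_fo_and; rewrite all_map; apply/allP => l hl /=.
rewrite hsub ?mem_iota; last by move: hl; rewrite mem_iota; lia.
by rewrite nth_cat !nth_nseq; do !case: ifP.
Qed.

Lemma eq_mkseq_nth (f : nat -> nat) k v : size v = k ->
  (mkseq f k == v) = all (fun l => f l == nth 0 v l) (iota 0 k).
Proof.
move=> hv; apply/eqP/allP => [<- l | hf].
- by rewrite mem_iota => /andP[_ hl]; rewrite nth_mkseq.
- apply: (eq_from_nth (x0 := 0)); first by rewrite size_mkseq.
  by move=> l; rewrite size_mkseq => hl; rewrite nth_mkseq //; apply/eqP/hf; rewrite mem_iota.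
Qed.

Lemma eval_marker_eqs t (w : seq 'I_t) env R a k i : i <= k ->
  eval w env R (marker_eqs t a k i) = (mkseq (fun l => env (a + l)) k == corner k (size w) i).
Proof.
move=> hi; rewrite eval_fo_and all_map eq_mkseq_nth ?size_corner //.
apply: eq_in_all => l; rewrite mem_iota => /= hl.
by rewrite -(map_term_val_corner (size w) env) (nth_map TMin) // size_cat !size_nseq; lia.
Qed.

Lemma mkseq_upds_iota env z a k : a + k <= size z ->
  mkseq (fun l => upds env (iota 0 (size z)) z (a + l)) k = take k (drop a z).
Proof.
move=> hz; apply: (eq_from_nth (x0 := 0)); first by rewrite size_mkseq size_takel ?size_drop; lia.
move=> l; rewrite size_mkseq => hl.
by rewrite nth_mkseq // upds_iota ?nth_take ?nth_drop //; lia.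
Qed.

Lemma ltn_lex_mulD a i a' i' k : i < k ->
  a < a' \/ a = a' /\ i < i' -> a * k + i < a' * k + i'.
Proof. by move=> hi [h | [-> h]]; [apply: leq_trans (leq_addr _ _); apply: ltn_mulD | lia]. Qed.

Section ConcatenatedToInterleaved.
Variables (n m k : nat).
Hypothesis n_gt0 : 0 < n.

(* The bit of [X_i] at the [j]-th [m]-tuple [tu] moves to the tuple [corner k n i ++ tu] of
   [X_i]; as [corner k n i] has index [n ^ i - 1], increasing in [i], the order is kept. *)
Definition ci_pos (a : nat) : nat :=
  ((n ^ (a %/ n ^ m) - 1) * n ^ m + a %% n ^ m) * k + a %/ n ^ m.

Lemma ci_posE i j : j < n ^ m -> ci_pos (i * n ^ m + j) = ((n ^ i - 1) * n ^ m + j) * k + i.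
Proof. by move=> hj; rewrite /ci_pos divnMDl ?divn_small ?addn0 ?modnMDl ?modn_small //; lia. Qed.

Lemma ci_pos_mono a b : a < b < k * n ^ m -> ci_pos a < ci_pos b.
Proof.
case/andP=> hab hb; have hP : 0 < n ^ m by rewrite expn_gt0 n_gt0.
have [hj hj'] := (ltn_pmod a hP, ltn_pmod b hP).
have hi' : b %/ n ^ m < k by rewrite ltn_divLR.
move: hab; rewrite (divn_eq a (n ^ m)) (divn_eq b (n ^ m)) !ci_posE //.
move: (a %/ _) (a %% _) (b %/ _) (b %% _) hj hj' hi' => i j i' j' hj hj' hi' hab.
have hii : i <= i' by nia.
apply: ltn_lex_mulD; first lia.
have [hlt | hge] := ltnP i i'; last first.
  have ei : i = i' by lia.
  by subst i'; left; rewrite ltn_add2l; lia.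
have [n_le1 | n_gt1] := leqP n 1.
  have n1 : n = 1 by lia.
  by subst n; right; rewrite !exp1n in hj hj' *; lia.
left; apply: (@leq_trans (n ^ i * n ^ m)).
  by apply: ltn_mulD => //; rewrite subn1 prednK ?expn_gt0 ?n_gt0.
apply: leq_trans (leq_addr _ _); rewrite leq_mul2r; apply/orP; right.
by have := ltn_exp2l i i' n_gt1; rewrite hlt; lia.
Qed.

Lemma corner_pos_lt i j : i < k -> j < n ^ m -> (n ^ i - 1) * n ^ m + j < n ^ (k + m).
Proof. by move=> hi hj; rewrite expnD ltn_mulD ?corner_index_lt. Qed.

Lemma ci_pos_lt a : a < k * n ^ m -> ci_pos a < k * n ^ (k + m).
Proof.
move=> ha; have hP : 0 < n ^ m by rewrite expn_gt0 n_gt0.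
have hi : a %/ n ^ m < k by rewrite ltn_divLR.
rewrite (divn_eq a (n ^ m)) ci_posE ?ltn_pmod //.
by apply: (@code_pos_lt Interleaved) => //; rewrite corner_pos_lt ?ltn_pmod.
Qed.

Lemma mem_ci_pos i z : i < k -> z \in tuples n (k + m) ->
  (code_pos Interleaved n (k + m) k i (tuple_index n z) \in map ci_pos (iota 0 (k * n ^ m))) =
  (take k z == corner k n i).
Proof.
move=> hi; rewrite mem_tuples => /andP[/eqP hz hza].
have hP : 0 < n ^ m by rewrite expn_gt0 n_gt0.
have hz1 : size (take k z) = k by rewrite size_takel ?hz ?leq_addr.
have hz2 : size (drop k z) = m by rewrite size_drop hz addKn.
rewrite -(cat_take_drop k z) all_cat in hza; case/andP: hza => hza1 hza2.
have hj2 := tuple_index_lt hza2; rewrite hz2 in hj2.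
rewrite -{1}(cat_take_drop k z) tuple_index_cat hz2 /=.
apply/mapP/eqP => [[a] | e1].
- rewrite mem_iota /= => ha; rewrite (divn_eq a (n ^ m)) ci_posE ?ltn_pmod // => e.
  have hi' : a %/ n ^ m < k by rewrite ltn_divLR.
  have [eA ei] := mulnD_inj hi hi' e; rewrite -{}ei in eA.
  have [e1 _] := mulnD_inj hj2 (ltn_pmod a hP) eA.
  apply: (tuple_index_inj hza1); rewrite ?tuple_index_corner ?size_corner //.
    by have := corner_in_tuples n_gt0 (ltnW hi); rewrite mem_tuples => /andP[].
  exact: ltnW.
- exists (i * n ^ m + tuple_index n (drop k z)); first by rewrite mem_iota /= ltn_mulD.
  by rewrite ci_posE // e1 tuple_index_corner.
Qed.

End ConcatenatedToInterleaved.

Definition ci_rel t (Xs : seq nat) (X : nat) (xs : seq term) : fo t :=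
  if X \in Xs then FRel t X (corner_terms (size Xs) (index X Xs) ++ xs) else FFalse.

Lemma eval_ci_rel t (w : seq 'I_t) Xs m b c env X xs :
  let n := size w in let k := size Xs in 0 < n ->
  (forall a, a < k * n ^ m -> nth false c (ci_pos n m k a) = nth false b a) ->
  eval w env (assign_bits Interleaved n (k + m) Xs c) (ci_rel t Xs X xs) =
  assign_bits Concatenated n m Xs b X (map (term_val n env) xs).
Proof.
move=> n k hn hc; rewrite /ci_rel /assign_bits; case hX: (X \in Xs) => //=.
rewrite hX map_cat map_term_val_corner; set i := index X Xs; set tu := map _ xs.
have hi : i < k by rewrite index_mem.
have := corner_in_tuples hn (ltnW hi); rewrite mem_tuples => /andP[/eqP hcs hca].
rewrite size_cat hcs eqn_add2l all_cat hca /=; case: eqP => //= hs; case ha: all => //=.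
have hj : tuple_index n tu < n ^ m by rewrite -hs tuple_index_lt.
by rewrite tuple_index_cat tuple_index_corner // hs -ci_posE // hc // ltn_mulD.
Qed.

Lemma simulates_concatenated_interleaved s (L : seq 'I_s -> Prop) (e : 'I_s) :
  neutral_letter L e -> simulates Concatenated Interleaved L.
Proof.
move=> neutral_e t q hq; case: (hq) => hm _ hu _ _.
set m := q_arity q; set Xs := q_vars q; set k := size Xs.
exists (embed_qsent e q (k + m) (ci_rel t Xs) (marker_eqs t 0 k)); split.
- apply: embed_qsent_wf; rewrite ?addn_gt0 ?hm ?orbT //.
  + move=> i; apply: closed_marker_eqs => l.
    by rewrite mem_rev !mem_iota /=; lia.
  + by move=> bnd X xs hX hxs; rewrite /ci_rel hX /= hX all_cat closed_corner_terms.
- move=> w hw; apply: (qsat_embed_qsent (sig := ci_pos (size w) m k) neutral_e hq).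
  + by move=> a b; apply: (ci_pos_mono hw).
  + by move=> a; apply: (ci_pos_lt hw).
  + move=> env i z R hi hz; have := hz; rewrite mem_tuples => /andP[/eqP hzs _].
    rewrite (mem_ci_pos hw hi hz) eval_marker_eqs; last exact: ltnW.
    by rewrite -hzs mkseq_upds_iota ?drop0 // hzs leq_addr.
  + by move=> b c hb hc env X xs; apply: eval_ci_rel.
Qed.

Section InterleavedToConcatenated.
Variables (n m k : nat).
Hypothesis n_gt0 : 0 < n.

(* The bit of [X_i] at the [j]-th [m]-tuple [tu] moves to the tuple [tu ++ corner k n i] of
   the first relation.  For [n = 1] there is no room for this, but then both codes list
   the [k] relations in the same order. *)
Definition ic_pos (a : nat) : nat :=
  if n == 1 then a else a %/ k * n ^ k + (n ^ (a %% k) - 1).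

Lemma ic_posE j i : i < k ->
  ic_pos (j * k + i) = if n == 1 then j * k + i else j * n ^ k + (n ^ i - 1).
Proof. by move=> hi; rewrite /ic_pos divnMDl ?divn_small ?addn0 ?modnMDl ?modn_small //; lia. Qed.

Lemma ic_pos_mono a b : a < b < k * n ^ m -> ic_pos a < ic_pos b.
Proof.
case/andP=> hab hb; have hk : 0 < k by case: k hb.
rewrite /ic_pos; case: eqP => // /eqP n_neq1; have n_gt1 : 1 < n by lia.
have [hi hi'] := (ltn_pmod a hk, ltn_pmod b hk).
have hjj : a %/ k <= b %/ k by apply: leq_div2r; lia.
apply: ltn_lex_mulD; first exact: corner_index_lt.
have [hlt | hge] := ltnP (a %/ k) (b %/ k); [by left | right; split; first lia].
have ei : a %/ k = b %/ k by lia.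
have ltii : a %% k < b %% k by move: hab; rewrite {1}(divn_eq a k) {1}(divn_eq b k) ei ltn_add2l.
by have := ltn_exp2l (a %% k) (b %% k) n_gt1; rewrite ltii; have := expn_gt0 n (a %% k); lia.
Qed.

Lemma ic_marker_pos_lt j i : j < n ^ m -> i < k -> j * n ^ k + (n ^ i - 1) < n ^ (m + k).
Proof. by move=> hj hi; rewrite expnD ltn_mulD ?corner_index_lt. Qed.

Lemma ic_pos_lt a : a < k * n ^ m -> ic_pos a < k * n ^ (m + k).
Proof.
move=> ha; have hk : 0 < k by case: k ha.
rewrite /ic_pos; case: eqP => [n1 | _]; first by move: ha; rewrite n1 !exp1n.
have hj : a %/ k < n ^ m by rewrite ltn_divLR // mulnC.
apply: leq_trans (_ : n ^ (m + k) <= _); last by rewrite leq_pmull.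
by rewrite ic_marker_pos_lt ?ltn_pmod.
Qed.

Lemma mem_ic_pos i z : i < k -> z \in tuples n (m + k) ->
  (code_pos Concatenated n (m + k) k i (tuple_index n z) \in map ic_pos (iota 0 (k * n ^ m))) =
  (n == 1) || (i == 0) && has (fun i' => drop m z == corner k n i') (iota 0 k).
Proof.
move=> hi; rewrite mem_tuples => /andP[/eqP hz hza]; have hk : 0 < k by case: k hi.
have [n1 | n_neq1] := eqVneq n 1; rewrite /=.
  have -> : tuple_index n z = 0 by have := tuple_index_lt hza; rewrite n1 exp1n; case: tuple_index.
  by rewrite /ic_pos n1 /= !exp1n !muln1 addn0 map_id mem_iota.
have hz1 : size (take m z) = m by rewrite size_takel ?hz ?leq_addr.
have hz2 : size (drop m z) = k by rewrite size_drop hz addKn.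
rewrite -(cat_take_drop m z) all_cat in hza; case/andP: hza => hza1 hza2.
have hj1 := tuple_index_lt hza1; rewrite hz1 in hj1.
have hj2 := tuple_index_lt hza2; rewrite hz2 in hj2.
have hpos : tuple_index n z = tuple_index n (take m z) * n ^ k + tuple_index n (drop m z).
  by rewrite -{1}(cat_take_drop m z) tuple_index_cat hz2.
rewrite hpos /=; apply/mapP/andP => [[a] | [/eqP -> /hasP[i' hi' /eqP e2]]].
- rewrite mem_iota /= => ha; rewrite (divn_eq a k) ic_posE ?ltn_pmod // (negbTE n_neq1).
  have [hj hi'] : a %/ k < n ^ m /\ a %% k < k by rewrite ltn_divLR // mulnC ltn_pmod.
  have hA := ic_marker_pos_lt hj hi'.
  have hT : tuple_index n (take m z) * n ^ k + tuple_index n (drop m z) < n ^ (m + k).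
    by rewrite expnD ltn_mulD.
  move=> e; have [-> e'] := mulnD_inj hT hA (e : _ = 0 * n ^ (m + k) + _).
  have [_ e2] := mulnD_inj hj2 (corner_index_lt n_gt0 hi') e'.
  split=> //; apply/hasP; exists (a %% k); rewrite ?mem_iota //.
  apply/eqP/(tuple_index_inj hza2); rewrite ?tuple_index_corner ?size_corner //; last exact: ltnW.
  by have := corner_in_tuples n_gt0 (ltnW hi'); rewrite mem_tuples => /andP[].
- move: hi'; rewrite mem_iota /= => hi'.
  exists (tuple_index n (take m z) * k + i'); first by rewrite mem_iota /= [k * _]mulnC ltn_mulD.
  by rewrite ic_posE // (negbTE n_neq1) e2 tuple_index_corner.
Qed.

End InterleavedToConcatenated.

(* [min = max] detects one-element strings, on which the relations are not packed into
   the first one (see [ic_pos]). *)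
Definition ic_rel t (Xs : seq nat) (X : nat) (xs : seq term) : fo t :=
  if X \in Xs then
    let xs' := xs ++ corner_terms (size Xs) (index X Xs) in
    FOr (FAnd (FEq t TMin TMax) (FRel t X xs'))
        (FAnd (FNot (FEq t TMin TMax)) (FRel t (head 0 Xs) xs'))
  else FFalse.

Lemma eq_min_max n : 0 < n -> (0 == n.-1) = (n == 1).
Proof. by case: n => [|[|n]]. Qed.

Lemma eval_ic_rel t (w : seq 'I_t) Xs m b c env X xs :
  let n := size w in let k := size Xs in 0 < n ->
  (forall a, a < k * n ^ m -> nth false c (ic_pos n k a) = nth false b a) ->
  eval w env (assign_bits Concatenated n (m + k) Xs c) (ic_rel t Xs X xs) =
  assign_bits Interleaved n m Xs b X (map (term_val n env) xs).
Proof.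
move=> n k hn hc; rewrite /ic_rel; case hX: (X \in Xs); last by rewrite /assign_bits hX.
rewrite /= map_cat map_term_val_corner eq_min_max //.
set i := index X Xs; set tu := map _ xs; have hi : i < k by rewrite index_mem.
have hk : 0 < k by apply: leq_ltn_trans hi.
have := corner_in_tuples hn (ltnW hi); rewrite mem_tuples => /andP[/eqP hcs hca].
have hX0 : head 0 Xs \in Xs by case: (Xs) hX => // x s _; rewrite mem_head.
have hi0 : index (head 0 Xs) Xs = 0 by case: (Xs) => //= x s; rewrite eqxx.
rewrite /assign_bits hX hX0 hi0 size_cat hcs eqn_add2r all_cat hca /= !andbT.
case: (size tu =P m) => [hs | _]; last by rewrite /= !andbF.
case ha: all; last by rewrite /= !andbF.
have hj : tuple_index n tu < n ^ m by rewrite -hs tuple_index_lt.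
rewrite tuple_index_cat tuple_index_corner // hcs -hc; last by rewrite [k * _]mulnC ltn_mulD.
rewrite ic_posE //; case: eqP => [n1 | _] //=; rewrite orbF.
have -> : tuple_index n tu = 0 by move: hj; rewrite /n n1 exp1n; case: tuple_index.
by rewrite /n n1 !exp1n !muln1 subnn !addn0.
Qed.

Definition ic_marker t (m k i : nat) : fo t :=
  FOr (FEq t TMin TMax)
      (if i == 0 then fo_or [seq marker_eqs t m k i' | i' <- iota 0 k] else FFalse).

Lemma simulates_interleaved_concatenated s (L : seq 'I_s -> Prop) (e : 'I_s) :
  neutral_letter L e -> simulates Interleaved Concatenated L.
Proof.
move=> neutral_e t q hq; case: (hq) => hm hk hu _ _.
set m := q_arity q; set Xs := q_vars q; set k := size Xs.
exists (embed_qsent e q (m + k) (ic_rel t Xs) (ic_marker t m k)); split.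
- apply: embed_qsent_wf; rewrite ?addn_gt0 ?hm //.
  + move=> i; rewrite /ic_marker /=; case: (i == 0) => //=.
    apply: closed_fo_or; rewrite all_map; apply/allP => i' _ /=.
    by apply: closed_marker_eqs => l; rewrite mem_rev !mem_iota /=; lia.
  + move=> bnd X xs hX hxs; rewrite /ic_rel hX /= hX all_cat hxs closed_corner_terms.
    by rewrite -nth0 mem_nth.
- move=> w hw; apply: (qsat_embed_qsent (sig := ic_pos (size w) k) neutral_e hq).
  + by move=> a b; apply: (ic_pos_mono hw).
  + by move=> a; apply: (ic_pos_lt hw).
  + move=> env i z R hi hz; have := hz; rewrite mem_tuples => /andP[/eqP hzs _].
    rewrite (mem_ic_pos hw hi hz) /ic_marker /= eq_min_max //; congr orb.
    case: (i == 0) => //=; rewrite eval_fo_or has_map; apply: eq_in_has => i'.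
    rewrite mem_iota /= => hi'; rewrite eval_marker_eqs; last exact: ltnW.
    by rewrite -hzs mkseq_upds_iota ?take_oversize // ?size_drop hzs ?addKn.
  + by move=> b c hb hc env X xs; apply: eval_ic_rel.
Qed.

Theorem proposition2p9 (s : nat) (L : seq 'I_s -> Prop) :
  (exists e : 'I_s, neutral_letter L e) ->
  logic_equiv Concatenated Interleaved L.
Proof.
case=> e neutral_e; split.
- exact: simulates_concatenated_interleaved neutral_e.
- exact: simulates_interleaved_concatenated neutral_e.
Qed.
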